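(* Let $\mathbf{f}\colon\mathbb{R}^n\to\mathbb{R}^n$ be a polynomial vector field, $B\in\mathbb{R}[\mathbf{x}]$, and $N=N_{B,\mathbf{f}}$. The following are equivalent: (a) for all $\mathbf{x}\in\mathbb{R}^n$ and all $1\le i\le N$: if $\mathcal{L}^j_{\mathbf{f}}B(\mathbf{x})=0$ for all $0\le j\le i-1$, then $\mathcal{L}^i_{\mathbf{f}}B(\mathbf{x})\le 0$; (b) for all $\mathbf{x}\in\mathbb{R}^n$ with $B(\mathbf{x})\le 0$: either there is $0\le i\le N$ with $\mathcal{L}^j_{\mathbf{f}}B(\mathbf{x})=0$ for all $0\le j\le i-1$ and $\mathcal{L}^i_{\mathbf{f}}B(\mathbf{x})<0$, or $\mathcal{L}^i_{\mathbf{f}}B(\mathbf{x})=0$ for all $0\le i\le N$.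
   Context: The Lie derivatives of $B$ along $\mathbf{f}$ are $\mathcal{L}^0_{\mathbf{f}}B=B$ and $\mathcal{L}^k_{\mathbf{f}}B=\langle \nabla \mathcal{L}^{k-1}_{\mathbf{f}}B,\mathbf{f}\rangle$ for $k>0$. $N_{B,\mathbf{f}}\in\mathbb{N}^+$ denotes the completeness threshold: the minimal index $i$ such that $\mathcal{L}^{i+1}_{\mathbf{f}}B$ belongs to the polynomial ideal generated by $\mathcal{L}^0_{\mathbf{f}}B,\dots,\mathcal{L}^i_{\mathbf{f}}B$. An empty conjunction (the case $i=0$) is true. *)

From HB Require Import structures.
From mathcomp Require Import all_boot all_order all_algebra.
From mathcomp Require Import mpoly.
Set Implicit Arguments. Unset Strict Implicit. Unset Printing Implicit Defensive.
Import Order.TTheory GRing.Theory Num.Theory.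
Local Open Scope ring_scope.

Definition lie1 (R : realFieldType) (n : nat) (f : 'I_n -> {mpoly R[n]})
  (p : {mpoly R[n]}) : {mpoly R[n]} :=
  \sum_(k < n) mderiv k p * f k.

Definition lie (R : realFieldType) (n : nat) (f : 'I_n -> {mpoly R[n]})
  (B : {mpoly R[n]}) (k : nat) : {mpoly R[n]} :=
  iter k (lie1 f) B.

Definition in_lie_ideal (R : realFieldType) (n : nat) (f : 'I_n -> {mpoly R[n]})
  (B : {mpoly R[n]}) (i : nat) (q : {mpoly R[n]}) : Prop :=
  exists g : 'I_i.+1 -> {mpoly R[n]},
    q = \sum_(j < i.+1) g j * lie f B j.

Definition completeness_threshold (R : realFieldType) (n : nat)
  (f : 'I_n -> {mpoly R[n]}) (B : {mpoly R[n]}) (N : nat) : Prop :=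
  in_lie_ideal f B N (lie f B N.+1) /\
  (forall i : nat, (i < N)%N -> ~ in_lie_ideal f B i (lie f B i.+1)).

From mathcomp Require Import all_boot all_order all_algebra.
From mathcomp Require Import mpoly.
Import Order.TTheory GRing.Theory Num.Theory.
Local Open Scope ring_scope.

(* At a fixed point x both conditions only concern the finite sequence
   L^0 B(x), ..., L^N B(x): each says that its first nonzero term, if any, is
   negative.  This equivalence holds for every N. *)

Section FirstNonzeroTerm.

Variables (R : numDomainType) (a : nat -> R).

Lemma first_nonzero_or_vanish (N : nat) :
  (exists i, [/\ (i <= N)%N, forall j, (j < i)%N -> a j = 0 & a i != 0])
  \/ (forall i, (i <= N)%N -> a i = 0).
Proof.
elim: N => [|N [[i [iN prefix0 ai]]|vanish]].
- have [a0|a0] := eqVneq (a 0%N) 0; [right | left].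
    by case.
  by exists 0%N.
- by left; exists i; rewrite leqW.
- have [aN|aN] := eqVneq (a N.+1) 0; [right | left].
    by move=> i; rewrite leq_eqVlt ltnS => /predU1P[->|/vanish].
  by exists N.+1; split=> // j; rewrite ltnS => /vanish.
Qed.

Lemma first_nonzero_term_neg (N : nat) :
  (forall i, (1 <= i <= N)%N -> (forall j, (j < i)%N -> a j = 0) -> a i <= 0)
  <->
  (a 0%N <= 0 ->
     (exists i, [/\ (i <= N)%N, forall j, (j < i)%N -> a j = 0 & a i < 0])
     \/ (forall i, (i <= N)%N -> a i = 0)).
Proof.
split=> [hyp a0|hyp i /andP[i_ge1 iN] prefix0].
- have [[i [iN prefix0 ai]]|] := first_nonzero_or_vanish N; [left | by right].
  exists i; split=> //; rewrite lt_neqAle ai /=.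
  by case: i iN prefix0 ai => [|i] // iN prefix0 _; apply: hyp.
- have a0 : a 0%N <= 0 by rewrite prefix0.
  have [[k [_ prefixk ak]]|vanish] := hyp a0; last by rewrite vanish.
  have [ki|ik|<-] := ltngtP k i; last exact: ltW.
  + by rewrite prefix0 ?ltxx in ak.
  + by rewrite prefixk.
Qed.

End FirstNonzeroTerm.

Theorem lemma2 (R : realFieldType) (n : nat) (f : 'I_n -> {mpoly R[n]})
  (B : {mpoly R[n]}) (N : nat) :
  completeness_threshold f B N ->
  ((forall (x : 'I_n -> R) (i : nat), (1 <= i <= N)%N ->
      (forall j : nat, (j < i)%N -> (lie f B j).@[x] = 0) ->
      (lie f B i).@[x] <= 0)
   <->
   (forall x : 'I_n -> R, B.@[x] <= 0 ->
      (exists i : nat, (i <= N)%N /\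
         (forall j : nat, (j < i)%N -> (lie f B j).@[x] = 0) /\
         (lie f B i).@[x] < 0)
      \/ (forall i : nat, (i <= N)%N -> (lie f B i).@[x] = 0))).
Proof.
move=> _; split=> [ha x Bx | hb x];
  have [to_b to_a] := @first_nonzero_term_neg _ (fun i => (lie f B i).@[x]) N.
- have [[i [iN prefix0 neg]]|vanish] := to_b (ha x) Bx.
  + by left; exists i.
  + by right.
- apply: to_a => Bx.
  have [[i [iN [prefix0 neg]]]|vanish] := hb x Bx.
  + by left; exists i; split.
  + by right.
Qed.
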